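(* Let $N$ be a finite set and $h,s:2^N\to\mathbb{R}$. Define the convolution $(h*s)_A=\sum_{X\subseteq N}h_Xs_{A\setminus X}$ for $A\subseteq N$, the transform $\widehat{s}^{(1)}_B=\sum_{A\subseteq N,\,A\cap B=\emptyset}s_A$, and the transform $\widehat{s}^{(3)}_B=\sum_{A\subseteq B}(-1)^{|A|}s_A$ for $B\subseteq N$. Then for every $B\subseteq N$, $$\widehat{(h*s)}^{(3)}_B=\widehat{h}^{(1)}_B\,\widehat{s}^{(3)}_B.$$ *)

From mathcomp Require Import all_boot all_order all_algebra.
From mathcomp Require Import reals.
Set Implicit Arguments. Unset Strict Implicit. Unset Printing Implicit Defensive.
Import Order.TTheory GRing.Theory Num.Theory.
Local Open Scope ring_scope.

Definition conv (R : realType) (N : finType) (h s : {set N} -> R) (A : {set N}) : R :=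
  \sum_(X : {set N}) h X * s (A :\: X).

Definition hat1 (R : realType) (N : finType) (s : {set N} -> R) (B : {set N}) : R :=
  \sum_(A : {set N} | [disjoint A & B]) s A.

Definition hat3 (R : realType) (N : finType) (s : {set N} -> R) (B : {set N}) : R :=
  \sum_(A : {set N} | A \subset B) (-1) ^+ #|A| * s A.

(* Expanding the convolution, the coefficient of [h X] in the left-hand side is
   the alternating sum of [s (A :\: X)] over [A \subset B].  If [X] meets [B] at
   some [z], the subsets [A] and [z |: A] contribute opposite terms, so this sum
   vanishes; otherwise [A :\: X = A] and it is the transform of [s] at [B].
   Summing over [X] leaves exactly the sets [X] disjoint from [B]. *)

From mathcomp Require Import all_boot all_order all_algebra.
From mathcomp Require Import reals.
Local Open Scope ring_scope.
Import GRing.Theory.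

Lemma big_subsets_setD1 {T : finType} {R : Type} {idx : R}
    {op : Monoid.com_law idx} (F : {set T} -> R) (B : {set T}) {z : T} :
  z \in B ->
  \big[op/idx]_(A : {set T} | A \subset B) F A =
  \big[op/idx]_(A : {set T} | A \subset B :\ z) op (F A) (F (z |: A)).
Proof.
move=> zB; rewrite big_split (bigID (fun A : {set T} => z \in A)) /= Monoid.mulmC.
congr (op _ _).
  by apply: eq_bigl => A; rewrite subsetD1 andbC.
rewrite (reindex_onto (fun A : {set T} => z |: A) (fun A => A :\ z)) /=; last first.
  by move=> A /andP[_ zA]; rewrite setD1K.
apply: eq_bigl => A; rewrite setU11 andbT subsetD1 subUset sub1set zB /=.
apply: andb_id2l => _; apply/eqP/idP => [<- | zNA]; first by rewrite setD11.
by rewrite setU1K.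
Qed.

Lemma alternating_sum_setD_eq0 (R : pzRingType) (T : finType)
    (f : {set T} -> R) (B X : {set T}) :
  ~~ [disjoint X & B] ->
  \sum_(A : {set T} | A \subset B) (-1) ^+ #|A| * f (A :\: X) = 0.
Proof.
rewrite -setI_eq0 => /set0Pn[z /setIP[zX zB]].
rewrite (big_subsets_setD1 _ _ zB) big1 // => A; rewrite subsetD1 => /andP[_ zNA].
have zX0 : [set z] :\: X = set0 by apply/eqP; rewrite setD_eq0 sub1set.
rewrite setDUl zX0 set0U.
by rewrite cardsU1 zNA exprS mulN1r mulNr; apply: subrr.
Qed.

Lemma hat3_setD (R : realType) (T : finType) (s : {set T} -> R) (B X : {set T}) :
  \sum_(A : {set T} | A \subset B) (-1) ^+ #|A| * s (A :\: X) =
  if [disjoint X & B] then hat3 s B else 0.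
Proof.
have [dXB | /alternating_sum_setD_eq0 -> //] := boolP [disjoint X & B].
apply: eq_bigr => A AB; congr (_ * s _); apply/setDidPl.
by apply: disjointWl AB _; rewrite disjoint_sym.
Qed.

Theorem mainTheorem8 (R : realType) (N : finType) (h s : {set N} -> R) (B : {set N}) :
  hat3 (conv h s) B = hat1 h B * hat3 s B.
Proof.
rewrite /hat3 /conv.
under eq_bigr => A _ do rewrite mulr_sumr.
rewrite exchange_big /= /hat1 mulr_suml [RHS]big_mkcond /=.
apply: eq_bigr => X _.
under eq_bigr => A _ do rewrite mulrCA.
rewrite -mulr_sumr hat3_setD -/(hat3 s B).
by case: ifP; rewrite ?mulr0.
Qed.
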